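(* Let $X_1,X_2,\dots$ be i.i.d. exponential random variables with mean $1$ and $\lambda_1,\lambda_2,\dots$ positive reals. Then for any $t\ge0$ and integers $k>m\ge0$, $$\mathbb{P}\Big(\sum_{i=1}^kX_i/\lambda_i\le t,\ \sum_{i=1}^mX_i/\lambda_i+\sum_{i=k+1}^{2k-m}X_i/\lambda_i\le t\Big)\le\frac{(et)^{2k-m}}{(k-m)^{2k-2m}m^m}\prod_{i=1}^{2k-m}\lambda_i.$$
   Context: The convention $0^0=1$ is used when $m=0$. *)

From HB Require Import structures.
From mathcomp Require Import all_boot all_order all_algebra.
From mathcomp Require Import all_classical all_reals all_analysis.
Set Implicit Arguments. Unset Strict Implicit. Unset Printing Implicit Defensive.
Import Order.TTheory GRing.Theory Num.Theory.
Local Open Scope classical_set_scope.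
Local Open Scope ring_scope.

Definition mutually_independent {d} {T : measurableType d} {R : realType}
  (P : probability T R) (X : nat -> {RV P >-> R}) : Prop :=
  forall (s : seq nat) (B : nat -> set R),
    uniq s -> (forall i, measurable (B i)) ->
    P (\bigcap_(i in [set j | j \in s]) (X i @^-1` B i)) =
    (\prod_(i <- s) P (X i @^-1` B i))%E.

Definition exp_mean1 {d} {T : measurableType d} {R : realType}
  (P : probability T R) (X : {RV P >-> R}) : Prop :=
  forall A : set R, measurable A -> distribution P X A = exponential_prob 1 A.
Arguments mutually_independent {d T R} P X.
Arguments exp_mean1 {d T R} P X.

(* With n = 2k - m, put a_i = lam_i t / m for i < m and a_i = lam_i t / (k - m)
   for m <= i < n.  On the event, every partial sum of the X_i / lam_i involved
   is at most t, so sum_(i<n) X_i / a_i <= m + 2(k - m) = n.  For independent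
   standard exponentials, P(sum X_i / a_i <= s) <= e^s prod a_i: this is the
   Chernoff bound e^s E[exp(-sum X_i / a_i)] = e^s prod a_i / (1 + a_i).  Since
   independence is only available as a product rule for events, the expectation
   is computed on a grid: the orthant is cut into boxes of side delta a_i, each
   box has product probability, and the resulting geometric sums are bounded by
   a_i.  With s = n this is the stated bound; t = 0 follows by letting t -> 0. *)

From HB Require Import structures.
From mathcomp Require Import all_boot all_order all_algebra.
From mathcomp Require Import all_classical all_reals all_analysis.
From mathcomp Require Import ring lra zify.

Set Implicit Arguments.
Unset Strict Implicit.
Unset Printing Implicit Defensive.

Import Order.TTheory GRing.Theory Num.Theory.
Import numFieldTopology.Exports.
Local Open Scope classical_set_scope.
Local Open Scope ring_scope.

Lemma exponential_prob_itvcc (R : realType) (r x y : R) : 0 <= x -> x < y ->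
  exponential_prob r `[x, y] = (expR (- r * x) - expR (- r * y))%:E.
Proof.
move=> x0 xy.
have cexpNM : continuous (fun z : R^o => expR (- r * z)).
  move=> z; apply: continuous_comp; last exact: continuous_expR.
  by apply: continuousM => //; apply: (@continuousN _ R^o); exact: cst_continuous.
rewrite /exponential_prob (@continuous_FTC2 _ _ (fun z => - expR (- r * z))) //.
- by rewrite /= opprK -EFinD addrC.
- apply: (@continuous_subspaceW R^o _ _ [set` `[0, +oo[%R]).
  + by move=> z /=; rewrite !in_itv /= => /andP[xz _]; rewrite (le_trans x0 xz).
  + exact: within_continuous_exponential_pdf.
- split.
  + by move=> z _; exact: ex_derive.
  + by apply/cvg_at_right_filter; apply: cvgN; exact: cexpNM.
  + by apply/cvg_at_left_filter; apply: cvgN; exact: cexpNM.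
- move=> z; rewrite in_itv/= => /andP[xz _].
  by apply: derive1_exponential_pdf; rewrite in_itv/= andbT (le_lt_trans x0 xz).
Qed.

Lemma exponential_prob_itvNy0 (R : realType) (r : R) :
  exponential_prob r `]-oo, 0[ = 0%E.
Proof.
rewrite /exponential_prob integral0_eq // => z /=; rewrite in_itv /= => z0.
by rewrite lt0_exponential_pdf.
Qed.

Lemma measure_bigsetU_le d (T : measurableType d) (R : realType)
    (mu : {measure set T -> \bar R}) (I : Type) (r : seq I) (Q : pred I)
    (A : I -> set T) :
  (forall i, measurable (A i)) ->
  (mu (\big[setU/set0]_(i <- r | Q i) A i) <= \sum_(i <- r | Q i) mu (A i))%E.
Proof.
move=> mA; elim: r => [|h r IH]; first by rewrite !big_nil measure0.
rewrite !big_cons; case: (Q h) => //.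
apply: le_trans (measureU2 _ _ _) _ => //; first exact: bigsetU_measurable.
exact: leeD.
Qed.

Lemma sum_expr_le_invB (R : realFieldType) (q : R) (N : nat) :
  0 <= q < 1 -> \sum_(x < N) q ^+ x <= (1 - q)^-1.
Proof.
case/andP=> q0 q1; have q1' : 0 < 1 - q by rewrite subr_gt0.
rewrite -(ler_pM2l q1') divff ?gt_eqF // -opprB mulNr -subrX1 opprB.
by rewrite gerBl exprn_ge0.
Qed.

Lemma le_oneBexpRN (R : realType) (s : R) :
  0 <= s -> s / (1 + s) <= 1 - expR (- s).
Proof.
move=> s0; have s1 : 0 < 1 + s by lra.
have : (1 + s)^-1 >= expR (- s).
  by rewrite expRN lef_pV2 ?posrE ?expR_gt0 // expR_ge1Dx.
have -> : s / (1 + s) = 1 - (1 + s)^-1 by field; rewrite gt_eqF.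
lra.
Qed.

Lemma measurable_ler_cst d (T : measurableType d) (R : realType)
    (f : T -> R) (s : R) :
  measurable_fun setT f -> measurable [set w | f w <= s].
Proof.
move=> mf; have := mf measurableT _ (measurable_itv `]-oo, s]); rewrite setTI.
by congr measurable; apply/seteqP; split=> w /=; rewrite in_itv.
Qed.

(* A Riemann sum for E[exp(-Y/a)] = a/(1+a), Y ~ Exp(1), on the mesh delta a;
   the condition on delta absorbs the discretisation error. *)
Lemma sum_exp_increments_le (R : realType) (a δ : R) (N : nat) :
  0 < a -> 0 < δ -> δ <= a / (1 + a) ->
  \sum_(x < N) (expR (- (x%:R * δ * a)) - expR (- (x.+1%:R * δ * a)))
               * expR (- (x%:R * δ)) <= a.
Proof.
move=> a0 δ0 δa; set q := expR (- (δ * (1 + a))); set c := 1 - expR (- (δ * a)).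
have -> : \sum_(x < N) (expR (- (x%:R * δ * a)) - expR (- (x.+1%:R * δ * a)))
                       * expR (- (x%:R * δ)) = c * \sum_(x < N) q ^+ x.
  rewrite mulr_sumr; apply: eq_bigr => x _.
  rewrite -expRM_natl !mulrBl mul1r -!expRD -natr1.
  by congr (expR _ - expR _); ring.
have s0 : 0 < δ * (1 + a) by rewrite mulr_gt0 //; lra.
have q_itv : 0 <= q < 1 by rewrite expR_ge0 expR_lt1 oppr_lt0.
have c0 : 0 <= c by rewrite subr_ge0 expR_le1 oppr_le0 mulr_ge0 ?ltW.
have c_le : c <= δ * a by have := expR_ge1Dx (- (δ * a)); rewrite /c; lra.
have δ_le : δ <= 1 - q.
  apply: le_trans _ (le_oneBexpRN (ltW s0)).
  rewrite ler_pdivlMr; last by lra.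
  have sa : δ * (1 + a) <= a by rewrite -ler_pdivlMr //; lra.
  by rewrite ler_pM2l // lerD2l.
have q1 : 0 < 1 - q by lra.
apply: le_trans (ler_wpM2l c0 (sum_expr_le_invB N q_itv)) _.
rewrite ler_pdivrMr //; apply: le_trans c_le _.
by rewrite mulrC ler_wpM2l // ltW.
Qed.

Lemma sum_cell_probs_le (R : realType) (n N : nat) (a : 'I_n -> R) (δ s : R) :
  (forall i, 0 < a i) -> 0 < δ -> (forall i, δ <= a i / (1 + a i)) ->
  \sum_(j : {ffun 'I_n -> 'I_N} | \sum_(i < n) (j i)%:R * δ <= s)
    \prod_(i < n)
      (expR (- ((j i)%:R * δ * a i)) - expR (- ((j i).+1%:R * δ * a i)))
  <= expR s * \prod_(i < n) a i.
Proof.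
move=> a0 δ0 δa.
pose F (i : 'I_n) (x : 'I_N) :=
  expR (- (x%:R * δ * a i)) - expR (- (x.+1%:R * δ * a i)).
pose G (i : 'I_n) (x : 'I_N) := F i x * expR (- (x%:R * δ)).
have F0 i x : 0 <= F i x.
  by rewrite subr_ge0 ler_expR lerN2 !ler_pM2r // ler_nat.
have G0 i x : 0 <= G i x by rewrite mulr_ge0 ?expR_ge0.
have weight (j : {ffun 'I_n -> 'I_N}) : \sum_(i < n) (j i)%:R * δ <= s ->
    \prod_(i < n) F i (j i) <= expR s * \prod_(i < n) G i (j i).
  move=> js; rewrite big_split /= mulrA -expR_sum mulrAC -expRD sumrN.
  rewrite -[leLHS]mul1r ler_wpM2r ?prodr_ge0 //.
  by apply: le_trans (expR_ge1Dx _); rewrite lerDl subr_ge0.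
pose Js := [pred j : {ffun 'I_n -> 'I_N} | \sum_(i < n) (j i)%:R * δ <= s].
apply: (le_trans (y := \sum_(j | Js j) expR s * \prod_(i < n) G i (j i))).
  exact: ler_sum.
apply: (le_trans (y := \sum_(j : {ffun 'I_n -> 'I_N}) expR s * \prod_(i < n) G i (j i))).
  rewrite [leRHS](bigID Js) /= lerDl sumr_ge0 // => j _.
  by rewrite mulr_ge0 ?expR_ge0 ?prodr_ge0.
rewrite -mulr_sumr ler_wpM2l ?expR_ge0 // -(bigA_distr_bigA G).
by apply: ler_prod => i _; rewrite sumr_ge0 //= sum_exp_increments_le.
Qed.

Lemma two_windows_sum_le (R : realFieldType) (f : nat -> R) (t : R) (k m : nat) :
  (m <= k)%N -> (forall i, (i < 2 * k - m)%N -> 0 <= f i) ->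
  \sum_(0 <= i < k) f i <= t ->
  \sum_(0 <= i < m) f i + \sum_(k <= i < 2 * k - m) f i <= t ->
  m%:R * \sum_(0 <= i < m) f i + (k - m)%:R * \sum_(m <= i < 2 * k - m) f i
    <= (2 * k - m)%:R * t.
Proof.
move=> mk f0; set n := (2 * k - m)%N.
have sum_ge0 lo hi : (hi <= n)%N -> 0 <= \sum_(lo <= i < hi) f i.
  move=> hin; rewrite big_nat_cond; apply: sumr_ge0 => i /andP[/andP[_ ih] _].
  by apply: f0; lia.
have kn : (k <= n)%N by rewrite /n; lia.
move=> /[dup] At; rewrite (big_cat_nat (n := m)) //= => Bt Ct.
rewrite (big_cat_nat (m := m) (n := k) (p := n)) //=.
have A0 := sum_ge0 0 m%N (leq_trans mk kn).
have B0 := sum_ge0 m k kn; have C0 := sum_ge0 k n (leqnn n).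
have -> : n%:R = m%:R + (k - m)%:R * 2 :> R by rewrite -natrM -natrD; congr _%:R; lia.
rewrite mulrDl -mulrA lerD // ler_wpM2l //.
all: lra.
Qed.

Lemma le0_of_le_expr (R : realFieldType) (x C : R) (n : nat) : (0 < n)%N ->
  (forall u, 0 < u -> x <= C * u ^+ n) -> x <= 0.
Proof.
move=> n0 xC; rewrite leNgt; apply/negP => x0.
have D0 : 0 < x + `|C| + 1 by rewrite -addrA ltr_pwDl // ltr_pwDl.
pose u := x / (x + `|C| + 1).
have u0 : 0 < u by rewrite divr_gt0.
have u1 : u <= 1 by rewrite ler_pdivrMr // mul1r -addrA lerDl addr_ge0.
have : x <= `|C| * u.
  apply: le_trans (xC u u0) _; apply: le_trans (ler_norm _) _.
  rewrite normrM ler_wpM2l // normrX ger0_norm; last exact: ltW.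
  by rewrite ler_iXnr // ltW.
rewrite /u mulrA ler_pdivlMr //; nra.
Qed.

Section exponential_sums.
Context d (T : measurableType d) (R : realType) (P : probability T R)
  (X : nat -> {RV P >-> R}).
Hypothesis X_indep : mutually_independent P X.
Hypothesis X_exp : forall i, exp_mean1 P (X i).

Lemma prob_X_itvcc i (x y : R) : 0 <= x -> x < y ->
  P (X i @^-1` `[x, y]) = (expR (- x) - expR (- y))%:E.
Proof.
move=> x0 xy; rewrite -[LHS]/(distribution P (X i) _) X_exp //.
by rewrite exponential_prob_itvcc // !mulN1r.
Qed.

Lemma prob_X_lt0 i : P (X i @^-1` `]-oo, 0[) = 0%E.
Proof.
by rewrite -[LHS]/(distribution P (X i) _) X_exp // exponential_prob_itvNy0.
Qed.

Lemma measurable_weighted_sum (c : nat -> R) (lo hi : nat) :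
  measurable_fun setT (fun w => \sum_(lo <= i < hi) X i w / c i).
Proof.
apply: measurable_sum => i.
by apply: measurable_realfun.measurable_funM => //; exact: measurable_cst.
Qed.

Definition nonneg_event n : set T := [set w | forall i, (i < n)%N -> 0 <= X i w].

Lemma nonneg_eventE n :
  nonneg_event n = \bigcap_(i in [set i | (i < n)%N]) X i @^-1` `[0, +oo[.
Proof.
apply/seteqP; split=> w Xw i ilt; have := Xw i ilt.
all: by rewrite /preimage /= in_itv /= ?andbT.
Qed.

Lemma measurable_nonneg_event n : measurable (nonneg_event n).
Proof.
rewrite nonneg_eventE; apply: bigcap_measurableType => i _.
by apply: measurable_funPTI; exact: measurable_itv.
Qed.

Lemma prob_setI_nonneg_event n (E : set T) : measurable E ->
  P E = P (E `&` nonneg_event n).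
Proof.
move=> mE; have mEA := measurableI _ _ mE (measurable_nonneg_event n).
have mNeg i : measurable (X i @^-1` `]-oo, 0[) by apply: measurable_funPTI.
apply/eqP; rewrite eq_le [Z in _ && Z]le_measure ?inE // andbT.
have cover : E `<=` (E `&` nonneg_event n) `|`
    \big[setU/set0]_(i <- index_iota 0 n) X i @^-1` `]-oo, 0[.
  move=> w Ew; have [Xw|] := pselect (nonneg_event n w); first by left.
  move=> /existsNP[i /not_implyP[ilt /negP]]; rewrite -ltNge => Xi_lt0.
  by right; rewrite -bigcup_seq; exists i; rewrite /= ?mem_index_iota ?in_itv.
apply: le_trans (le_measure _ _ _ cover) _; rewrite ?inE //.
  by apply: measurableU => //; exact: bigsetU_measurable.
apply: le_trans (measureU2 _ _ _) _ => //; first exact: bigsetU_measurable.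
rewrite -[leRHS]adde0 leeD // (le_trans (measure_bigsetU_le _ _ _ mNeg)) //.
by rewrite big1 // => i _; exact: prob_X_lt0.
Qed.

Section cells.
Variables (n N : nat) (a : nat -> R) (δ : R).

Definition cell (j : {ffun 'I_n -> 'I_N}) : set T :=
  \bigcap_(i : 'I_n) X i @^-1` `[(j i)%:R * δ * a i, (j i).+1%:R * δ * a i].

(* The constraints of [cell j] indexed by nat, as [mutually_independent]
   requires; indices i >= n carry the junk constraint setT. *)
Let cell_itv (j : {ffun 'I_n -> 'I_N}) (i : nat) : set R :=
  if insub i is Some o then `[(j o)%:R * δ * a i, (j o).+1%:R * δ * a i] else setT.

Let cellE j :
  cell j = \bigcap_(i in [set i | i \in index_iota 0 n]) X i @^-1` cell_itv j i.
Proof.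
apply/seteqP; split=> w jw i /=.
  rewrite mem_index_iota => ilt; have := jw (Ordinal ilt) I.
  by rewrite /cell_itv insubT.
move=> _; have := jw (val i); rewrite /cell_itv valK; apply.
by rewrite /= mem_index_iota ltn_ord.
Qed.

Lemma measurable_cell j : measurable (cell j).
Proof.
rewrite cellE; apply: bigcap_measurableType => i _; apply: measurable_funPTI.
rewrite /cell_itv; case: (insub i) => [oi|].
- exact: measurable_itv.
- exact: measurableT.
Qed.

Lemma prob_cell j : (forall i, 0 < a i) -> 0 < δ ->
  P (cell j) = (\prod_(i < n)
    (expR (- ((j i)%:R * δ * a i)) - expR (- ((j i).+1%:R * δ * a i))))%:E.
Proof.
move=> a0 δ0; rewrite cellE X_indep ?iota_uniq //; last first.
  move=> i; rewrite /cell_itv; case: (insub i) => [oi|].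
  - exact: measurable_itv.
  - exact: measurableT.
rewrite big_mkord -prodEFin; apply: eq_bigr => i _.
rewrite /cell_itv valK prob_X_itvcc //.
  by rewrite !mulr_ge0 // ltW.
by rewrite !ltr_pM2r // ltr_nat.
Qed.

Lemma exists_cell w s :
  (forall i, 0 < a i) -> 0 < δ -> (Num.truncn (s / δ) < N)%N ->
  (forall i, (i < n)%N -> 0 <= X i w) -> \sum_(0 <= i < n) X i w / a i <= s ->
  exists2 j : {ffun 'I_n -> 'I_N}, \sum_(i < n) (j i)%:R * δ <= s & cell j w.
Proof.
move=> a0 δ0 sN Xw0 Xws.
have term_ge0 (i : 'I_n) : 0 <= X i w / a i by rewrite divr_ge0 ?Xw0 // ltW.
pose y (i : 'I_n) := X i w / a i / δ.
have y0 i : 0 <= y i by rewrite divr_ge0 // ltW.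
have yN i : (Num.truncn (y i) < N)%N.
  apply: leq_ltn_trans sN; apply: le_truncn; rewrite ler_pM2r ?invr_gt0 //.
  apply: le_trans Xws; rewrite big_mkord (bigD1 i) //= lerDl.
  by apply: sumr_ge0.
exists [ffun i => Ordinal (yN i)].
  apply: le_trans Xws; rewrite big_mkord; apply: ler_sum => i _.
  by rewrite ffunE /= -ler_pdivlMr //; have /andP[] := truncn_itv (y0 i).
move=> i _; rewrite ffunE /= in_itv /=.
have δa0 : 0 < δ * a i by rewrite mulr_gt0.
have /andP[] := truncn_itv (y0 i).
rewrite /y -mulrA -invfM [a i * _]mulrC ler_pdivlMr // ltr_pdivrMr // => lo hi.
by rewrite -!mulrA lo ltW.
Qed.

End cells.

Lemma prob_weighted_sum_le n (a : nat -> R) (s : R) : (forall i, 0 < a i) ->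
  (P (nonneg_event n `&` [set w | \sum_(0 <= i < n) X i w / a i <= s]%R)
   <= (expR s * \prod_(0 <= i < n) a i)%:E)%E.
Proof.
move=> a0; pose δ := \prod_(0 <= i < n) (a i / (1 + a i)).
have a1 i : 0 < 1 + a i by rewrite addr_gt0.
have δ0 : 0 < δ by apply: prodr_gt0 => i _; rewrite divr_gt0.
have δa (i : 'I_n) : δ <= a i / (1 + a i).
  rewrite /δ (bigD1_seq (val i)) ?mem_index_iota ?iota_uniq //=.
  rewrite -[leRHS]mulr1 ler_wpM2l //; first by rewrite divr_ge0 // ltW.
  apply: prodr_ile1 => j _; rewrite divr_ge0 ?ltW //=.
  by rewrite ltr_pdivrMr // mul1r ltrDr.
pose N := (Num.truncn (s / δ)).+1.
pose Js := [pred j : {ffun 'I_n -> 'I_N} | \sum_(i < n) (j i)%:R * δ <= s].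
have cover : nonneg_event n `&` [set w | \sum_(0 <= i < n) X i w / a i <= s]
    `<=` \big[setU/set0]_(j | Js j) cell a δ j.
  move=> w [Xw0 Xws]; have [j js jw] := exists_cell a0 δ0 (ltnSn _) Xw0 Xws.
  by rewrite -bigcup_seq_cond; exists j; rewrite /= ?mem_index_enum.
apply: le_trans (le_measure _ _ _ cover) _; rewrite ?inE.
- apply: measurableI; first exact: measurable_nonneg_event.
  exact/measurable_ler_cst/measurable_weighted_sum.
- by apply: bigsetU_measurable => j _; exact: measurable_cell.
apply: le_trans (measure_bigsetU_le P _ _ (measurable_cell a δ)) _.
rewrite (eq_bigr _ (fun j _ => prob_cell j a0 δ0)) sumEFin lee_fin big_mkord.
exact: sum_cell_probs_le.
Qed.

Definition two_windows_event (lam : nat -> R) (k m : nat) (t : R) : set T :=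
  [set w | \sum_(0 <= i < k) X i w / lam i <= t /\
           \sum_(0 <= i < m) X i w / lam i
           + \sum_(k <= i < 2 * k - m) X i w / lam i <= t].

Lemma measurable_two_windows_event lam k m t :
  measurable (two_windows_event lam k m t).
Proof.
by apply: measurableI; apply: measurable_ler_cst;
  [|apply: measurable_realfun.measurable_funD]; exact: measurable_weighted_sum.
Qed.

Lemma le_two_windows_event lam k m :
  {homo two_windows_event lam k m : t u / t <= u >-> t `<=` u}.
Proof. by move=> t u tu w [At Bt]; split; apply: le_trans tu. Qed.

Lemma two_windows_prob_le (lam : nat -> R) (k m : nat) (t : R) :
  (forall i, 0 < lam i) -> 0 < t -> (m < k)%N ->
  (P (two_windows_event lam k m t) <= ((expR 1 * t) ^+ (2 * k - m)
       / ((k - m)%:R ^+ (2 * k - 2 * m) * m%:R ^+ m)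
       * \prod_(0 <= i < 2 * k - m) lam i)%:E)%E.
Proof.
move=> lam0 t0 mk; set n := (2 * k - m)%N; set E := two_windows_event _ _ _ _.
pose c i : R := (if (i < m)%N then m else k - m)%N%:R.
pose a i := lam i * t / c i.
have c0 i : 0 < c i by rewrite /c ltr0n; case: ifP => /=; lia.
have a0 i : 0 < a i by rewrite divr_gt0 ?mulr_gt0.
have mn : (m <= n)%N by rewrite /n; lia.
have mE : measurable E := measurable_two_windows_event lam k m t.
have sum_a w : \sum_(0 <= i < n) X i w / a i =
    (m%:R * \sum_(0 <= i < m) X i w / lam i
     + (k - m)%:R * \sum_(m <= i < n) X i w / lam i) / t.
  have Xa i : X i w / a i = c i / t * (X i w / lam i).
    rewrite /a; field; apply/and3P; split; apply: lt0r_neq0;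
      [exact: lam0 | exact: t0 | exact: c0].
  rewrite (big_cat_nat (n := m)) //=.
  have -> : \sum_(0 <= i < m) X i w / a i =
      m%:R / t * \sum_(0 <= i < m) X i w / lam i.
    by rewrite mulr_sumr; apply: eq_big_nat => i /andP[_ ilt]; rewrite Xa /c ilt.
  have -> : \sum_(m <= i < n) X i w / a i =
      (k - m)%:R / t * \sum_(m <= i < n) X i w / lam i.
    rewrite mulr_sumr; apply: eq_big_nat => i /andP[mi _].
    by rewrite Xa /c ltnNge mi.
  by field; rewrite lt0r_neq0.
have prod_a : \prod_(0 <= i < n) a i =
    t ^+ n / ((k - m)%:R ^+ (n - m) * m%:R ^+ m) * \prod_(0 <= i < n) lam i.
  rewrite (big_cat_nat (n := m) (F := a)) //= (big_cat_nat (n := m) (F := lam)) //=.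
  have -> : \prod_(0 <= i < m) a i = \prod_(0 <= i < m) (lam i * (t / m%:R)).
    by apply: eq_big_nat => i /andP[_ ilt]; rewrite /a /c ilt mulrA.
  have -> : \prod_(m <= i < n) a i = \prod_(m <= i < n) (lam i * (t / (k - m)%:R)).
    by apply: eq_big_nat => i /andP[mi _]; rewrite /a /c ltnNge mi mulrA.
  rewrite !big_split /= !prodr_const_nat subn0 !exprVn.
  by rewrite -[in t ^+ n](subnKC mn) exprD invfM; ring.
have sub : E `&` nonneg_event n `<=`
    nonneg_event n `&` [set w | \sum_(0 <= i < n) X i w / a i <= n%:R].
  move=> w [[At ACt] Xw0]; split => //=; rewrite sum_a ler_pdivrMr //.
  apply: two_windows_sum_le => // [|i ilt]; first exact: ltnW.
  by rewrite divr_ge0 ?Xw0 // ltW.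
rewrite (prob_setI_nonneg_event n mE).
apply: le_trans (le_measure _ _ _ sub) (le_trans (prob_weighted_sum_le n n%:R a0) _).
- by rewrite inE; apply: measurableI => //; exact: measurable_nonneg_event.
- rewrite inE; apply: measurableI; first exact: measurable_nonneg_event.
  exact/measurable_ler_cst/measurable_weighted_sum.
rewrite lee_fin prod_a -[in expR _](mulr1 n%:R) expRM_natl exprMn.
have -> : (2 * k - 2 * m = n - m)%N by rewrite /n; lia.
by rewrite !mulrA.
Qed.

Lemma two_windows_prob0 (lam : nat -> R) (k m : nat) :
  (forall i, 0 < lam i) -> (m < k)%N -> P (two_windows_event lam k m 0) = 0%E.
Proof.
move=> lam0 mk; set n := (2 * k - m)%N; have n0 : (0 < n)%N by rewrite /n; lia.
set E0 := two_windows_event _ _ _ _.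
have mE0 := measurable_two_windows_event lam k m 0.
set C := expR 1 ^+ n / ((k - m)%:R ^+ (2 * k - 2 * m) * m%:R ^+ m)
         * \prod_(0 <= i < n) lam i.
apply/eqP; rewrite -measure_le0 -(fineK (fin_num_measure P _ mE0)) lee_fin.
apply: (@le0_of_le_expr _ _ C n n0) => u u0.
rewrite -lee_fin fineK ?(fin_num_measure P _ mE0) //.
have sub : E0 `<=` two_windows_event lam k m u := le_two_windows_event (ltW u0).
apply: le_trans (le_measure _ _ _ sub) _; rewrite ?inE //.
  exact: measurable_two_windows_event.
have -> : C * u ^+ n =
    (expR 1 * u) ^+ n / ((k - m)%:R ^+ (2 * k - 2 * m) * m%:R ^+ m)
    * \prod_(0 <= i < n) lam i by rewrite exprMn /C; ring.
exact: two_windows_prob_le.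
Qed.

End exponential_sums.

Theorem lemma2p2 (d : measure_display) (T : measurableType d) (R : realType)
  (P : probability T R) (X : nat -> {RV P >-> R}) (lam : nat -> R)
  (hind : mutually_independent P X)
  (hexp : forall i, exp_mean1 P (X i))
  (hlam : forall i, 0 < lam i)
  (t : R) (ht : 0 <= t) (k m : nat) (hmk : (m < k)%N) :
  (P [set w | (\sum_(0 <= i < k) X i w / lam i <= t)%R /\
              (\sum_(0 <= i < m) X i w / lam i
               + \sum_(k <= i < 2 * k - m) X i w / lam i <= t)%R]
   <= ((expR 1 * t) ^+ (2 * k - m)
       / ((k - m)%:R ^+ (2 * k - 2 * m) * m%:R ^+ m)
       * \prod_(0 <= i < 2 * k - m) lam i)%:E)%E.
Proof.
have [t0|t_le0] := ltP 0 t; first exact: two_windows_prob_le.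
have {t_le0 ht} -> : t = 0 by apply/eqP; rewrite eq_le t_le0.
rewrite mulr0 expr0n gtn_eqF; last by lia.
rewrite !mul0r -[P _]/(P (two_windows_event X lam k m 0)).
by rewrite two_windows_prob0.
Qed.
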